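(* Let $\mathsf K_{\rm c}\in[\mathsf K]$, $\mathsf m\in[\mathsf N_{\rm r}]$ and $\mathsf M=\frac{\mathsf K}{\mathsf N}(\mathsf N-\mathsf N_{\rm r}+\mathsf m)$. For any linear-coding based scheme for the non-secure distributed linearly separable computation problem with parameters $(\mathsf K,\mathsf N,\mathsf N_{\rm r},\mathsf K_{\rm c},\mathsf M)$, there exists a secure scheme (satisfying the security constraint) with the same assignment and without increasing the communication cost.
   Context: Setting: positive integers $\mathsf K,\mathsf N,\mathsf N_{\rm r}$ with $\mathsf N_{\rm r}\le\mathsf N$, $\mathsf N\mid\mathsf K$; a finite field $\mathbb F_{\mathsf q}$ ($\mathsf q$ a sufficiently large prime power) and integer $\mathsf L$. Messages $W_1,\dots,W_{\mathsf K}$ are independent, each uniform over $\mathbb F_{\mathsf q}^{\mathsf L}$ ($W_k$ is a function of dataset $D_k$). The user wants $\mathbf G[W_1;\dots;W_{\mathsf K}]$ for a given $\mathsf K_{\rm c}\times\mathsf K$ matrix $\mathbf G$ over $\mathbb F_{\mathsf q}$. Non-secure problem: an assignment $\mathcal Z_n\subseteq[\mathsf K]$, $|\mathcal Z_n|\le\mathsf M$, for each server $n\in[\mathsf N]$; server $n$ sends $X_n\in\mathbb F_{\mathsf q}^{\mathsf T_n}$, a function of $\{W_k:k\in\mathcal Z_n\}$; for every $\mathcal A\subseteq[\mathsf N]$ with $|\mathcal A|=\mathsf N_{\rm r}$ the user can compute $\mathbf G[W_1;\dots;W_{\mathsf K}]$ from $\{X_n:n\in\mathcal A\}$. Communication cost: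 $\max_{|\mathcal A|=\mathsf N_{\rm r}}\sum_{n\in\mathcal A}\mathsf T_n/\mathsf L$. A scheme is linear-coding based if, for some $\ell$ dividing $\mathsf L$, each $W_k$ is split into $\ell$ equal-length sub-messages $W_{k,1},\dots,W_{k,\ell}\in\mathbb F_{\mathsf q}^{\mathsf L/\ell}$, each server $n$ sends $\ell\mathsf T_n/\mathsf L$ linear combinations (with fixed coefficients in $\mathbb F_{\mathsf q}$) of the sub-messages $W_{k,j}$, $k\in\mathcal Z_n$, and decoding is linear. A secure scheme additionally uses a random variable $Q$ independent of the datasets, given to all servers but not to the user, with $X_n$ a function of $(\{W_k:k\in\mathcal Z_n\},Q)$, the same decodability requirement (the user does not know $Q$), and the security constraint $I(W_1,\dots,W_{\mathsf K};X_1,\dots,X_{\mathsf N}\mid\mathbf G[W_1;\dots;W_{\mathsf K}])=0$. *)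

From HB Require Import structures.
From mathcomp Require Import all_boot all_order all_algebra.
From mathcomp Require Import all_classical all_reals all_analysis.
Set Implicit Arguments. Unset Strict Implicit. Unset Printing Implicit Defensive.
Import Order.TTheory GRing.Theory Num.Theory.
Local Open Scope ring_scope.

(* Conditional mutual information I(A;B|C) of a joint pmf p on A x B x C
   (natural logarithm; the base is irrelevant for the value 0), with the
   convention 0 log(.) = 0. *)
Definition cmi (R : realType) (A B C : finType) (p : A -> B -> C -> R) : R :=
  let pC c := \sum_(a : A) \sum_(b : B) p a b c in
  let pAC a c := \sum_(b : B) p a b c in
  let pBC b c := \sum_(a : A) p a b c in
  \sum_(a : A) \sum_(b : B) \sum_(c : C)
     (if p a b c == 0 then 0
      else p a b c * ln (p a b c * pC c / (pAC a c * pBC b c))).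

Section Scheme.
Variables (F : finFieldType) (K N Kc L : nat).

(* W is the K x L matrix whose k-th row is the message W_k in F^L. *)
(* i-th symbol of message W_k (0 if out of range). *)
Definition mget (w : 'M[F]_(K, L)) (k : 'I_K) (i : nat) : F :=
  odflt 0 (omap (w k) (insub i)).

Definition depends_only (T : 'I_N -> nat) (A : {set 'I_N}) (X : Type)
    (dec : (forall n : 'I_N, 'rV[F]_(T n)) -> X) : Prop :=
  forall x y : (forall n : 'I_N, 'rV[F]_(T n)),
    (forall n, n \in A -> x n = y n) -> dec x = dec y.

Definition linear_decoder (T : 'I_N -> nat)
    (dec : (forall n : 'I_N, 'rV[F]_(T n)) -> 'M[F]_(Kc, L)) : Prop :=
  (forall x y, dec (fun n => x n + y n) = dec x + dec y) /\
  (forall (a : F) x, dec (fun n => a *: x n) = a *: dec x).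

Definition ns_scheme (Nr M : nat) (G : 'M[F]_(Kc, K)) (Z : 'I_N -> {set 'I_K})
    (T : 'I_N -> nat) (enc : forall n : 'I_N, 'M[F]_(K, L) -> 'rV[F]_(T n)) :
    Prop :=
  (forall n, #|Z n| <= M)%N /\
  (forall n w w', (forall k, k \in Z n -> row k w = row k w') ->
     enc n w = enc n w') /\
  (forall A : {set 'I_N}, #|A| = Nr ->
     exists dec : (forall n : 'I_N, 'rV[F]_(T n)) -> 'M[F]_(Kc, L),
       depends_only A dec /\ forall w, dec (fun n => enc n w) = G *m w).

(* Linear-coding based: each W_k is split into l sub-messages
   W_{k,j} = symbols j*(L/l) .. j*(L/l)+L/l-1 of W_k; server n sends
   c n = l T_n / L linear combinations (coefficients E n i k j, zero
   unless k in Z_n) of the sub-messages, concatenated; decoding linear. *)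
Definition linear_coding_based (Nr M : nat) (G : 'M[F]_(Kc, K))
    (Z : 'I_N -> {set 'I_K}) (T : 'I_N -> nat)
    (enc : forall n : 'I_N, 'M[F]_(K, L) -> 'rV[F]_(T n)) : Prop :=
  @ns_scheme Nr M G Z T enc /\
  exists (l : nat) (c : 'I_N -> nat) (E : forall n : 'I_N, nat -> 'I_K -> 'I_l -> F),
    [/\ (0 < l)%N, (l %| L)%N,
        (forall n, T n = c n * (L %/ l))%N,
        (forall n i k j, k \notin Z n -> E n i k j = 0) &
        [/\
        (forall n w, enc n w =
           \row_(t < T n) \sum_(k < K) \sum_(j < l)
              E n (t %/ (L %/ l))%N k j * mget w k (j * (L %/ l) + t %% (L %/ l))%N) &
        (forall A : {set 'I_N}, #|A| = Nr ->
          exists dec : (forall n : 'I_N, 'rV[F]_(T n)) -> 'M[F]_(Kc, L),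
            [/\ depends_only A dec, linear_decoder dec &
                forall w, dec (fun n => enc n w) = G *m w])]].

Definition answers (T : 'I_N -> nat) := {dffun forall n : 'I_N, 'rV[F]_(T n)}.

(* joint pmf of (W, (X_1..X_N), G W), with W uniform on F^(K x L) and
   Q ~ pQ independent of W *)
Definition joint_WXGW (R : realType) (G : 'M[F]_(Kc, K)) (Q : finType)
    (pQ : Q -> R) (T : 'I_N -> nat)
    (sec : forall n : 'I_N, 'M[F]_(K, L) -> Q -> 'rV[F]_(T n))
    (w : 'M[F]_(K, L)) (x : answers T) (g : 'M[F]_(Kc, L)) : R :=
  \sum_(q : Q) (pQ q / #|{: 'M[F]_(K, L)}|%:R) *
     (x == [ffun n => sec n w q] :> answers T)%:R * (g == G *m w)%:R.

(* Secure scheme with common randomness Q ~ pQ, unknown to the user. *)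
Definition secure_scheme (R : realType) (Nr M : nat) (G : 'M[F]_(Kc, K))
    (Z : 'I_N -> {set 'I_K}) (Q : finType) (pQ : Q -> R) (T : 'I_N -> nat)
    (sec : forall n : 'I_N, 'M[F]_(K, L) -> Q -> 'rV[F]_(T n)) : Prop :=
  [/\ (forall q, 0 <= pQ q), \sum_(q : Q) pQ q = 1,
      (forall n, #|Z n| <= M)%N & [/\
      (forall n q w w', (forall k, k \in Z n -> row k w = row k w') ->
         sec n w q = sec n w' q),
      (forall A : {set 'I_N}, #|A| = Nr ->
         exists dec : (forall n : 'I_N, 'rV[F]_(T n)) -> 'M[F]_(Kc, L),
           depends_only A dec /\ forall w q, dec (fun n => sec n w q) = G *m w) &
      cmi (joint_WXGW G pQ sec) = 0]].

Definition comm_cost (Nr : nat) (T : 'I_N -> nat) : rat :=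
  (\max_(A : {set 'I_N} | #|A| == Nr) \sum_(n in A) T n)%N%:R / L%:R.

End Scheme.

From HB Require Import structures.
From mathcomp Require Import all_boot all_order all_algebra.
From mathcomp Require Import all_classical all_reals all_analysis.
Set Implicit Arguments. Unset Strict Implicit. Unset Printing Implicit Defensive.
Import Order.TTheory GRing.Theory Num.Theory.
Local Open Scope ring_scope.

(* The servers share a uniformly random V in the kernel of G and run the
   non-secure scheme on W + V instead of W.  Since G (W + V) = G W, every
   decoder of the non-secure scheme still returns G W, while the assignment
   and the answer lengths are untouched.  Given G W, the shifted messages
   W + V are uniform on the coset W + ker G, which depends on W only through
   G W; hence the answers are conditionally independent of W given G W. *)

Section ConditionalIndependence.
Variables (R : realType) (A B C : finType).

Lemma cmi_eq0_of_product_rule (p : A -> B -> C -> R) :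
  (forall a b c, p a b c * (\sum_a' \sum_b' p a' b' c) =
                 (\sum_b' p a b' c) * (\sum_a' p a' b c)) ->
  cmi p = 0.
Proof.
move=> prod_rule; rewrite /cmi /=.
apply: big1 => a _; apply: big1 => b _; apply: big1 => c _.
case: eqP => // _; rewrite prod_rule; set D := (X in ln (X / _)).
have [->|D_neq0] := eqVneq D 0; first by rewrite mul0r ln0 ?mulr0.
by rewrite mulfV // ln1 mulr0.
Qed.

Lemma cmi_factor_eq0 (phi : A -> C) (k : A -> B -> R) (p : A -> B -> C -> R) :
  (forall a a' b, phi a = phi a' -> k a b = k a' b) ->
  (forall a b c, p a b c = (c == phi a)%:R * k a b) ->
  cmi p = 0.
Proof.
move=> k_phi p_def; apply: cmi_eq0_of_product_rule => a b c.
have [->|c_neq] := eqVneq c (phi a); last first.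
  have p0 b' : p a b' c = 0 by rewrite p_def (negbTE c_neq) mul0r.
  by rewrite p0 mul0r big1 ?mul0r.
have p_phi a' b' : p a' b' (phi a) = (phi a' == phi a)%:R * k a b'.
  by rewrite p_def eq_sym; case: eqP => [/(k_phi _ _ b')->|]; rewrite ?mul0r.
set n := \sum_a' ((phi a' == phi a)%:R : R).
have pC : \sum_a' \sum_b' p a' b' (phi a) = n * \sum_b' k a b'.
  rewrite big_distrl; apply: eq_bigr => a' _.
  by rewrite big_distrr; apply: eq_bigr => b' _; exact: p_phi.
have pBC : \sum_a' p a' b (phi a) = n * k a b.
  by rewrite big_distrl; apply: eq_bigr => a' _; exact: p_phi.
have pAC : \sum_b' p a b' (phi a) = \sum_b' k a b'.
  by apply: eq_bigr => b' _; rewrite p_phi eqxx mul1r.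
by rewrite pC pBC pAC p_phi eqxx mul1r mulrCA [RHS]mulrCA [k a b * _]mulrC.
Qed.

End ConditionalIndependence.

Section KernelShift.
Variables (V : finZmodType) (W : zmodType) (g : {additive V -> W}).

Definition ker_type := {v : V | g v == 0}.

Definition ker0 : ker_type := exist _ 0 (introT eqP (raddf0 g)).

Lemma card_ker_gt0 : (0 < #|{: ker_type}|)%N.
Proof. by apply/card_gt0P; exists ker0. Qed.

Lemma sum_shift_ker (X : nmodType) (f : V -> X) w w' : g w = g w' ->
  \sum_(v : ker_type) f (w + val v) = \sum_(v : ker_type) f (w' + val v).
Proof.
move=> gw; set d := w' - w.
have gd : g d = 0 by rewrite raddfB gw subrr.
pose shift (v : ker_type) : ker_type := insubd v (val v + d).
have shiftE v : val (shift v) = val v + d.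
  by rewrite val_insubd raddfD (eqP (valP v)) gd addr0 eqxx.
have shift_inj : injective shift.
  by move=> v1 v2 /(congr1 val); rewrite !shiftE => /addIr /val_inj.
rewrite (reindex_inj shift_inj); apply: eq_bigr => v _.
by rewrite shiftE addrA addrC addrA subrK addrC.
Qed.

End KernelShift.

Section MaskedScheme.
Variables (R : realType) (F : finFieldType) (K N Kc L Nr M : nat).
Variables (G : 'M[F]_(Kc, K)) (Z : 'I_N -> {set 'I_K}) (T : 'I_N -> nat).
Variable enc : forall n : 'I_N, 'M[F]_(K, L) -> 'rV[F]_(T n).
Hypothesis enc_ns : @ns_scheme F K N Kc L Nr M G Z T enc.

Definition mask_type := ker_type (mulmx G : {additive 'M[F]_(K, L) -> 'M[F]_(Kc, L)}).

Definition uniform_mask (v : mask_type) : R := #|{: mask_type}|%:R^-1.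

Definition masked_enc (n : 'I_N) (w : 'M[F]_(K, L)) (v : mask_type) :
  'rV[F]_(T n) := enc n (w + val v).

Lemma mulmx_mask (w : 'M[F]_(K, L)) (v : mask_type) : G *m (w + val v) = G *m w.
Proof. by rewrite mulmxDr (eqP (valP v)) addr0. Qed.

Lemma sum_uniform_mask : \sum_(v : mask_type) uniform_mask v = 1.
Proof.
rewrite /uniform_mask; set n := (X in X^-1).
rewrite sumr_const -mulr_natr -/n mulVf //.
by rewrite pnatr_eq0 -lt0n card_ker_gt0.
Qed.

Lemma masked_enc_local n v w w' :
  (forall k, k \in Z n -> row k w = row k w') ->
  masked_enc n w v = masked_enc n w' v.
Proof.
have [_ [enc_local _]] := enc_ns.
by move=> wZ; apply: enc_local => k /wZ; rewrite !linearD /= => ->.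
Qed.

Lemma masked_enc_decodable (A : {set 'I_N}) : #|A| = Nr ->
  exists dec : (forall n : 'I_N, 'rV[F]_(T n)) -> 'M[F]_(Kc, L),
    depends_only A dec /\
    forall w v, dec (fun n => masked_enc n w v) = G *m w.
Proof.
have [_ [_ enc_dec]] := enc_ns.
move=> /enc_dec [dec [dec_A decE]]; exists dec; split => // w v.
by rewrite decE mulmx_mask.
Qed.

Lemma masked_enc_secure :
  cmi (@joint_WXGW F K N Kc L R G _ uniform_mask T masked_enc) = 0.
Proof.
set c : R := #|{: mask_type}|%:R^-1 / #|{: 'M[F]_(K, L)}|%:R.
pose k w (x : answers F T) := \sum_(v : mask_type)
  c * (x == [ffun n => enc n (w + val v)] :> answers F T)%:R.
apply: (@cmi_factor_eq0 _ _ _ _ (mulmx G) k).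
  move=> w w' x GwE.
  exact: (sum_shift_ker (fun u => c * (x == [ffun n => enc n u] :> answers F T)%:R) GwE).
by move=> w x g; rewrite mulr_sumr; apply: eq_bigr => v _; rewrite mulrC.
Qed.

Lemma masked_secure_scheme :
  @secure_scheme F K N Kc L R Nr M G Z mask_type uniform_mask T masked_enc.
Proof.
have [enc_card _] := enc_ns.
split; [by move=> v; rewrite invr_ge0 ler0n | exact: sum_uniform_mask | exact: enc_card |].
split; [exact: masked_enc_local | exact: masked_enc_decodable | exact: masked_enc_secure].
Qed.

End MaskedScheme.

Theorem theorem2 :
  forall (R : realType) (K N Nr Kc m M : nat),
    (0 < K)%N -> (0 < N)%N -> (0 < Nr)%N -> (Nr <= N)%N -> (N %| K)%N ->
    (1 <= Kc <= K)%N -> (1 <= m <= Nr)%N ->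
    M = (K %/ N * (N - Nr + m))%N ->
    exists q0 : nat, forall F : finFieldType, (q0 <= #|F|)%N ->
    forall (L : nat) (G : 'M[F]_(Kc, K)) (Z : 'I_N -> {set 'I_K})
           (T : 'I_N -> nat) (enc : forall n : 'I_N, 'M[F]_(K, L) -> 'rV[F]_(T n)),
      @linear_coding_based F K N Kc L Nr M G Z T enc ->
      exists (Q : finType) (pQ : Q -> R) (T' : 'I_N -> nat)
             (sec : forall n : 'I_N, 'M[F]_(K, L) -> Q -> 'rV[F]_(T' n)),
        @secure_scheme F K N Kc L R Nr M G Z Q pQ T' sec /\
        @comm_cost N L Nr T' <= @comm_cost N L Nr T.
Proof.
move=> R K N Nr Kc m M _ _ _ _ _ _ _ _; exists 0%N => F _ L G Z T enc [enc_ns _].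
exists (mask_type L G), (uniform_mask R (G:=G)), T, (masked_enc (G:=G) enc).
by split; [exact: masked_secure_scheme | exact: lexx].
Qed.
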